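(* Let $\mathbf{Sober}$ be the category of sober semitopologies with continuous maps, and $\mathbf{Spatial}$ the category of spatial semiframes with semiframe morphisms. Define $\mathrm{Fr}(\mathsf P,\mathcal O)=(\mathcal O,\subseteq,\between)$ and, for a continuous $f$, $\mathrm{Fr}(f)=f^{-1}$; define $\mathrm{St}$ on objects as below and, for a semiframe morphism $g:(X',\le',\ast')\to(X,\le,\ast)$, $\mathrm{St}(g)=g^\circ:\mathrm{Points}(X,\le,\ast)\to\mathrm{Points}(X',\le',\ast')$, $g^\circ(F)=\{x'\in X'\mid g(x')\in F\}$. Then $\mathrm{Fr}:\mathbf{Sober}\to\mathbf{Spatial}^{op}$ and $\mathrm{St}:\mathbf{Spatial}^{op}\to\mathbf{Sober}$ are well-defined functors forming an equivalence of categories (a duality between $\mathbf{Sober}$ and $\mathbf{Spatial}$), with natural isomorphisms $\mathrm{nbhd}:(\mathsf P,\mathcal O)\to\mathrm{St}\,\mathrm{Fr}(\mathsf P,\mathcal O)$, $p\mapsto\{O\in\mathcal O\mid p\in O\}$, and $\mathrm{Op}:(X,\le,\ast)\to\mathrm{Fr}\,\mathrm{St}(X,\le,\ast)$, $x\mapsto\mathrm{Op}(x)$.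
   Context: A semitopology is a set $\mathsf P$ with $\mathcal O\subseteq\mathcal P(\mathsf P)$ containing $\varnothing,\mathsf P$ and closed under arbitrary unions; morphisms are continuous maps (preimages of opens are open). A semiframe is a complete join-semilattice $(X,\le)$ (with $\bot_X=\bigvee\varnothing$, $\top_X=\bigvee X$) with a relation $\ast$ that is commutative, satisfies $x\ast x$ for $x\neq\bot_X$, and $x\ast\bigvee Y$ iff $x\ast y$ for some $y\in Y$; $(\mathcal O,\subseteq,\between)$, where $O\between O'$ iff $O\cap O'\ne\varnothing$, is a semiframe. A semiframe morphism $g:(X',\le',\ast')\to(X,\le,\ast)$ is a map preserving all joins and the top element ($g(\top_{X'})=\top_X$) such that $g(x')\ast g(x'')$ implies $x'\ast' x''$. An abstract point is a nonempty, up-closed, pairwise $\ast$-compatible subset $F$ that is completely prime ($\bigvee Y\in F$ implies some $y\in Y$ lies in $F$, for all $Y$ including $\varnothing$); $\mathrm{Points}(X,\le,\ast)$ is the set of abstract points; $\mathrm{Op}(x)$ is the set of abstract points containing $x$; $\mathrm{St}(X,\le,\ast)$ is the semitopology with points $\mathrm{Points}(X,\le,\ast)$ and opens $\{\mathrm{Op}(x)\mid x\in X\}$. A semiframe is spatial when $\mathrm{Op}(x)\subseteq\mathrm{Op}(x')$ implies $x\le x'$, and $x\ast x'$ implies $\mathrm{Op}(x)\cap\mathrm{Op}(x')\ne\varnothing$. A semitopology is sober when $\mathrm{nbhd}$ is a bijection from $\mathsf P$ onto $\mathrm{Points}(\mathcal O,\subseteq,\between)$. *)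

Unset Strict Implicit.
Unset Implicit Arguments.

Definition set (T : Type) := T -> Prop.
Definition set0 {T : Type} : set T := fun _ => False.
Definition setT {T : Type} : set T := fun _ => True.
Definition bigcup {T : Type} (I : set (set T)) : set T :=
  fun p => exists U, I U /\ U p.
Definition preimage {A B : Type} (f : A -> B) (U : set B) : set A :=
  fun a => U (f a).
Definition image {A B : Type} (f : A -> B) (Y : set A) : set B :=
  fun b => exists a, Y a /\ b = f a.

Record semitopology (P : Type) (O : set (set P)) : Prop := {
  semitop_empty : O set0;
  semitop_full : O setT;
  semitop_union : forall I : set (set P), (forall U, I U -> O U) -> O (bigcup I)
}.

Definition continuous {P P' : Type} (O : set (set P)) (O' : set (set P'))
  (f : P -> P') : Prop :=
  forall U', O' U' -> O (preimage f U').

Definition homeomorphism {P P' : Type} (O : set (set P)) (O' : set (set P'))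
  (f : P -> P') : Prop :=
  exists g : P' -> P, (forall p, g (f p) = p) /\ (forall p', f (g p') = p') /\
    continuous O O' f /\ continuous O' O g.

Definition is_lub {X : Type} (le : X -> X -> Prop) (Y : set X) (j : X) : Prop :=
  (forall y, Y y -> le y j) /\ (forall z, (forall y, Y y -> le y z) -> le j z).

Record semiframe (X : Type) (le : X -> X -> Prop) (ast : X -> X -> Prop) : Prop := {
  sf_refl : forall x, le x x;
  sf_trans : forall x y z, le x y -> le y z -> le x z;
  sf_antisym : forall x y, le x y -> le y x -> x = y;
  sf_complete : forall Y : set X, exists j, is_lub le Y j;
  sf_comm : forall x y, ast x y -> ast y x;
  sf_ast_refl : forall x bot, is_lub le set0 bot -> x <> bot -> ast x x;
  sf_ast_join : forall x (Y : set X) j, is_lub le Y j ->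
      (ast x j <-> exists y, Y y /\ ast x y)
}.

Definition sf_morphism {X' X : Type} (le' ast' : X' -> X' -> Prop)
  (le ast : X -> X -> Prop) (g : X' -> X) : Prop :=
  (forall (Y : set X') j, is_lub le' Y j -> is_lub le (image g Y) (g j)) /\
  (forall t' t, is_lub le' setT t' -> is_lub le setT t -> g t' = t) /\
  (forall x y, ast (g x) (g y) -> ast' x y).

Definition sf_iso {X' X : Type} (le' ast' : X' -> X' -> Prop)
  (le ast : X -> X -> Prop) (g : X' -> X) : Prop :=
  exists h : X -> X', (forall x, h (g x) = x) /\ (forall y, g (h y) = y) /\
    sf_morphism le' ast' le ast g /\ sf_morphism le ast le' ast' h.

Definition is_point {X : Type} (le ast : X -> X -> Prop) (F : set X) : Prop :=
  (exists x, F x) /\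
  (forall x y, F x -> le x y -> F y) /\
  (forall x y, F x -> F y -> ast x y) /\
  (forall (Y : set X) j, is_lub le Y j -> F j -> exists y, Y y /\ F y).

Definition Points {X : Type} (le ast : X -> X -> Prop) : Type :=
  {F : set X | is_point le ast F}.

Definition Op {X : Type} (le ast : X -> X -> Prop) (x : X) : set (Points le ast) :=
  fun F => proj1_sig F x.

Definition St_opens {X : Type} (le ast : X -> X -> Prop) : set (set (Points le ast)) :=
  fun U => exists x, U = Op le ast x.

Definition spatial {X : Type} (le ast : X -> X -> Prop) : Prop :=
  (forall x x', (forall F, Op le ast x F -> Op le ast x' F) -> le x x') /\
  (forall x x', ast x x' -> exists F, Op le ast x F /\ Op le ast x' F).

Definition OpenT {P : Type} (O : set (set P)) : Type := {U : set P | O U}.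

Definition Fr_le {P : Type} (O : set (set P)) (U V : OpenT O) : Prop :=
  forall p, proj1_sig U p -> proj1_sig V p.

Definition Fr_ast {P : Type} (O : set (set P)) (U V : OpenT O) : Prop :=
  exists p, proj1_sig U p /\ proj1_sig V p.

Definition Fr_map {P P' : Type} {O : set (set P)} {O' : set (set P')} {f : P -> P'}
  (hf : continuous O O' f) : OpenT O' -> OpenT O :=
  fun U => exist _ (preimage f (proj1_sig U)) (hf _ (proj2_sig U)).

Definition nbhd {P : Type} (O : set (set P)) (p : P) : set (OpenT O) :=
  fun U => proj1_sig U p.

Definition sober {P : Type} (O : set (set P)) : Prop :=
  (forall p, is_point (Fr_le O) (Fr_ast O) (nbhd O p)) /\
  (forall p q, nbhd O p = nbhd O q -> p = q) /\
  (forall F, is_point (Fr_le O) (Fr_ast O) F -> exists p, nbhd O p = F).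

Definition nbhd_map {P : Type} {O : set (set P)}
  (Hn : forall p, is_point (Fr_le O) (Fr_ast O) (nbhd O p)) :
  P -> Points (Fr_le O) (Fr_ast O) :=
  fun p => exist _ (nbhd O p) (Hn p).

Definition pre {X' X : Type} (g : X' -> X) (F : set X) : set X' :=
  fun x' => F (g x').

Definition St_map {X' X : Type} {le' ast' : X' -> X' -> Prop}
  {le ast : X -> X -> Prop} {g : X' -> X}
  (Hp : forall F, is_point le ast F -> is_point le' ast' (pre g F)) :
  Points le ast -> Points le' ast' :=
  fun F => exist _ (pre g (proj1_sig F)) (Hp _ (proj2_sig F)).

Definition Op_map {X : Type} (le ast : X -> X -> Prop) :
  X -> OpenT (St_opens le ast) :=
  fun x => exist _ (Op le ast x) (ex_intro _ x eq_refl).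

Arguments semitopology {P} O.
Arguments semiframe {X} le ast.

From Stdlib Require Import Classical FunctionalExtensionality PropExtensionality
  ProofIrrelevance ClassicalEpsilon.

(* The proof rests on two "join" descriptions.  In the semiframe Fr(P,O) of
   opens the join of a family of opens is its union (Fr_lub_iff), which needs
   only closure of O under unions; in an arbitrary semiframe, completely prime
   up-sets turn joins into existentials, so Op sends joins to unions
   (Op_lub, Op_map_lub).  From these:
   - Fr(P,O) is a semiframe; it is spatial because every nbhd p is a point,
     and Fr(f) = f^{-1} preserves unions, the top, and reflects overlap;
   - St(X) is a semitopology whose opens are exactly the sets Op(x); it is
     sober since a point of Fr(St X) is determined by, and determines, the
     point {x | Op x in it} of X; g° sends points to points because a
     semiframe morphism is monotone, preserves joins and the top;
   - nbhd is a homeomorphism (sobriety gives the inverse) and Op is a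
     semiframe isomorphism (spatiality makes it an order embedding).
   Functoriality and naturality then hold definitionally, up to the
   proof-irrelevant second components of the subset types involved. *)

Lemma sig_eq {A : Type} (Q : A -> Prop) (x y : sig Q) :
  proj1_sig x = proj1_sig y -> x = y.
Proof. apply eq_sig_hprop; intros; apply proof_irrelevance. Qed.

Lemma set_ext {T : Type} (A B : set T) : (forall x, A x <-> B x) -> A = B.
Proof.
  intros H; apply functional_extensionality; intros x.
  apply propositional_extensionality; auto.
Qed.

Lemma open_eq {P : Type} (O : set (set P)) (U V : OpenT O) :
  (forall p, proj1_sig U p <-> proj1_sig V p) -> U = V.
Proof. intros H; apply sig_eq, set_ext, H. Qed.

Lemma Fr_le_antisym {P : Type} (O : set (set P)) (U V : OpenT O) :
  Fr_le O U V -> Fr_le O V U -> U = V.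
Proof. intros H1 H2; apply open_eq; split; auto. Qed.

Lemma union_open {P : Type} {O : set (set P)} (HO : semitopology O)
  (Y : set (OpenT O)) : O (bigcup (fun A => exists U, Y U /\ A = proj1_sig U)).
Proof. apply (semitop_union _ _ HO). intros A [U [_ ->]]; exact (proj2_sig U). Qed.

Definition Fr_union {P : Type} {O : set (set P)} (HO : semitopology O)
  (Y : set (OpenT O)) : OpenT O :=
  exist _ _ (union_open HO Y).

Lemma Fr_union_iff {P : Type} {O : set (set P)} (HO : semitopology O)
  (Y : set (OpenT O)) p :
  proj1_sig (Fr_union HO Y) p <-> exists U, Y U /\ proj1_sig U p.
Proof.
  simpl; split.
  - intros [A [[U [HU ->]] HA]]; eauto.
  - intros [U [HU Hp]]; exists (proj1_sig U); eauto.
Qed.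

Lemma Fr_lub_intro {P : Type} (O : set (set P)) (Y : set (OpenT O)) j :
  (forall p, proj1_sig j p <-> exists U, Y U /\ proj1_sig U p) ->
  is_lub (Fr_le O) Y j.
Proof.
  intros H; split.
  - intros U HU p Hp; apply H; eauto.
  - intros z Hz p Hp. apply H in Hp as [U [HU HUp]]. exact (Hz U HU p HUp).
Qed.

(* Conversely every join in Fr(P,O) is the union, since the union is open. *)
Lemma Fr_lub_iff {P : Type} {O : set (set P)} (HO : semitopology O)
  (Y : set (OpenT O)) j :
  is_lub (Fr_le O) Y j -> forall p, proj1_sig j p <-> exists U, Y U /\ proj1_sig U p.
Proof.
  intros [Hub Hl] p; split.
  - intros Hj. apply (Fr_union_iff HO Y p).
    apply (Hl (Fr_union HO Y)); [|exact Hj].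
    intros U HU q Hq. apply (Fr_union_iff HO Y q); eauto.
  - intros [U [HU HUp]]. exact (Hub U HU p HUp).
Qed.

Lemma Fr_top_full {P : Type} {O : set (set P)} (HO : semitopology O) t :
  is_lub (Fr_le O) setT t -> forall p, proj1_sig t p.
Proof.
  intros Ht p. apply (Fr_lub_iff HO _ _ Ht).
  exists (exist _ setT (semitop_full _ _ HO)); split; exact I.
Qed.

Lemma Fr_semiframe {P : Type} (O : set (set P)) :
  semitopology O -> semiframe (Fr_le O) (Fr_ast O).
Proof.
  intros HO. constructor.
  - intros U p; auto.
  - intros U V W H1 H2 p Hp; auto.
  - apply Fr_le_antisym.
  - intros Y. exists (Fr_union HO Y). apply Fr_lub_intro, Fr_union_iff.
  - intros U V [p [H1 H2]]; exists p; auto.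
  - intros U bot Hbot Hne.
    destruct (classic (exists p, proj1_sig U p)) as [[p Hp]|Hempty].
    + exists p; auto.
    + exfalso; apply Hne, Fr_le_antisym.
      * intros p Hp; exfalso; eauto.
      * apply (proj2 Hbot). intros V [].
  - intros U Y j Hj. pose proof (Fr_lub_iff HO Y j Hj) as Hu. split.
    + intros [p [H1 H2]]. apply Hu in H2 as [V [HV HVp]]. exists V; split; auto.
      exists p; auto.
    + intros [V [HV [p [H1 H2]]]]. exists p; split; auto. apply Hu; eauto.
Qed.

Lemma Fr_spatial {P : Type} (O : set (set P)) :
  (forall p, is_point (Fr_le O) (Fr_ast O) (nbhd O p)) ->
  spatial (Fr_le O) (Fr_ast O).
Proof.
  intros Hn. split.
  - intros U V H p Hp. exact (H (exist _ (nbhd O p) (Hn p)) Hp).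
  - intros U V [p [H1 H2]]. exists (exist _ (nbhd O p) (Hn p)); split; auto.
Qed.

Lemma Fr_map_morphism {P P' : Type} (O : set (set P)) (O' : set (set P'))
  (f : P -> P') (hf : continuous O O' f) :
  semitopology O -> semitopology O' ->
  sf_morphism (Fr_le O') (Fr_ast O') (Fr_le O) (Fr_ast O) (Fr_map hf).
Proof.
  intros HO HO'. split; [|split].
  - intros Y j Hj. apply Fr_lub_intro. intros p; simpl; unfold preimage.
    rewrite (Fr_lub_iff HO' Y j Hj). split.
    + intros [U [HU HUp]]. exists (Fr_map hf U); split; auto. exists U; auto.
    + intros [V [[U [HU ->]] HV]]. exists U; split; auto.
  - intros t' t Ht' Ht. apply open_eq. intros p; split; intros _.
    + apply (Fr_top_full HO _ Ht).
    + apply (Fr_top_full HO' _ Ht').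
  - intros U V [p [H1 H2]]. exists (f p); auto.
Qed.

Lemma point_up {X : Type} (le ast : X -> X -> Prop) F :
  is_point le ast F -> forall x y, F x -> le x y -> F y.
Proof. intros [_ [H _]]; exact H. Qed.

Lemma point_top {X : Type} (le ast : X -> X -> Prop) F t :
  is_point le ast F -> is_lub le setT t -> F t.
Proof.
  intros HF Ht. destruct HF as [[x Fx] [Hup _]].
  apply (Hup x); auto. apply (proj1 Ht); exact I.
Qed.

Lemma point_lub_iff {X : Type} (le ast : X -> X -> Prop) F (Y : set X) j :
  is_point le ast F -> is_lub le Y j -> (F j <-> exists y, Y y /\ F y).
Proof.
  intros HF Hj; split.
  - intros Fj. destruct HF as [_ [_ [_ Hprime]]]. eauto.
  - intros [y [Hy Fy]]. apply (point_up le ast F HF y); auto. apply (proj1 Hj); auto.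
Qed.

Lemma Op_lub {X : Type} (le ast : X -> X -> Prop) (Y : set X) j :
  is_lub le Y j -> forall F, Op le ast j F <-> exists y, Y y /\ Op le ast y F.
Proof. intros Hj F. exact (point_lub_iff le ast _ Y j (proj2_sig F) Hj). Qed.

Lemma Op_map_lub {X : Type} (le ast : X -> X -> Prop) (Y : set X) j :
  is_lub le Y j ->
  is_lub (Fr_le (St_opens le ast)) (image (Op_map le ast) Y) (Op_map le ast j).
Proof.
  intros Hj. apply Fr_lub_intro. intros F; simpl. rewrite (Op_lub le ast _ _ Hj F).
  split.
  - intros [y [Hy HF]]. exists (Op_map le ast y); split; auto. exists y; auto.
  - intros [V [[y [Hy ->]] HV]]. eauto.
Qed.

Lemma Op_map_mono {X : Type} (le ast : X -> X -> Prop) x y :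
  le x y -> Fr_le (St_opens le ast) (Op_map le ast x) (Op_map le ast y).
Proof. intros Hxy F HF. exact (point_up le ast _ (proj2_sig F) x y HF Hxy). Qed.

Lemma St_open_Op {X : Type} (le ast : X -> X -> Prop) (U : OpenT (St_opens le ast)) :
  exists x, U = Op_map le ast x.
Proof. destruct U as [U [x Hx]]. exists x. apply sig_eq. exact Hx. Qed.

(* St(X) is a semitopology: Op bot is empty, Op top is full, and a union of
   sets Op x is Op of the join. *)
Lemma St_semitopology {X : Type} (le ast : X -> X -> Prop) :
  semiframe le ast -> semitopology (St_opens le ast).
Proof.
  intros HX. constructor.
  - destruct (sf_complete _ _ _ HX set0) as [b Hb]. exists b.
    apply set_ext. intros F; split; [intros []|].
    intros HF. apply (Op_lub le ast _ _ Hb) in HF as [y [[] _]].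
  - destruct (sf_complete _ _ _ HX setT) as [t Ht]. exists t.
    apply set_ext. intros F; split; intros _; [|exact I].
    exact (point_top le ast _ t (proj2_sig F) Ht).
  - intros I HI.
    destruct (sf_complete _ _ _ HX (fun x => I (Op le ast x))) as [j Hj]. exists j.
    apply set_ext. intros F. rewrite (Op_lub le ast _ _ Hj F). split.
    + intros [U [HU HUF]]. destruct (HI U HU) as [x ->]. eauto.
    + intros [y [Hy HyF]]. exists (Op le ast y); auto.
Qed.

Lemma point_of_St_point {X : Type} (le ast : X -> X -> Prop) FF :
  is_point (Fr_le (St_opens le ast)) (Fr_ast (St_opens le ast)) FF ->
  is_point le ast (fun x => FF (Op_map le ast x)).
Proof.
  intros [[U HU] [Hup [Hcompat Hprime]]]. split; [|split; [|split]].
  - destruct (St_open_Op le ast U) as [x ->]. exists x; exact HU.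
  - intros x y Fx Hxy. exact (Hup _ _ Fx (Op_map_mono le ast x y Hxy)).
  - intros x y Fx Fy. destruct (Hcompat _ _ Fx Fy) as [G [Gx Gy]].
    destruct (proj2_sig G) as [_ [_ [HG _]]]. exact (HG x y Gx Gy).
  - intros Y j Hj Fj.
    destruct (Hprime _ _ (Op_map_lub le ast Y j Hj) Fj) as [V [[y [Hy ->]] HV]].
    eauto.
Qed.

Lemma St_sober {X : Type} (le ast : X -> X -> Prop) :
  semiframe le ast -> sober (St_opens le ast).
Proof.
  intros HX. pose proof (St_semitopology le ast HX) as HS. split; [|split].
  - intros F. split; [|split; [|split]].
    + exists (exist _ setT (semitop_full _ _ HS)). exact I.
    + intros U V HU HUV. exact (HUV F HU).
    + intros U V HU HV. exists F; split; auto.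
    + intros Y j Hj HF. exact (proj1 (Fr_lub_iff HS Y j Hj F) HF).
  - intros F G H. apply sig_eq, set_ext. intros x.
    pose proof (f_equal (fun N => N (Op_map le ast x)) H) as Hx.
    change (proj1_sig F x = proj1_sig G x) in Hx. rewrite Hx; tauto.
  - intros FF HFF. exists (exist _ _ (point_of_St_point le ast FF HFF)).
    apply set_ext. intros U. destruct (St_open_Op le ast U) as [x ->].
    unfold nbhd; simpl. tauto.
Qed.

(* Semiframe morphisms are monotone (they preserve binary joins). *)
Lemma sf_morphism_mono {X' X : Type} (le' ast' : X' -> X' -> Prop)
  (le ast : X -> X -> Prop) g :
  semiframe le' ast' -> sf_morphism le' ast' le ast g ->
  forall x y, le' x y -> le (g x) (g y).
Proof.
  intros HX' [Hjoin _] x y Hxy.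
  assert (Hl : is_lub le' (fun z => z = x \/ z = y) y).
  { split.
    - intros z [-> | ->]; auto. apply (sf_refl _ _ _ HX').
    - intros z Hz. apply Hz; auto. }
  apply (proj1 (Hjoin _ _ Hl)). exists x; auto.
Qed.

Lemma pre_point {X' X : Type} (le' ast' : X' -> X' -> Prop) (le ast : X -> X -> Prop)
  (g : X' -> X) :
  semiframe le' ast' -> semiframe le ast -> sf_morphism le' ast' le ast g ->
  forall F, is_point le ast F -> is_point le' ast' (pre g F).
Proof.
  intros HX' HX Hg F HF. pose proof HF as [_ [Hup [Hcompat Hprime]]].
  split; [|split; [|split]].
  - destruct (sf_complete _ _ _ HX' setT) as [t' Ht'].
    destruct (sf_complete _ _ _ HX setT) as [t Ht].
    exists t'. unfold pre. rewrite (proj1 (proj2 Hg) t' t Ht' Ht).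
    exact (point_top le ast F t HF Ht).
  - intros a b Ha Hab. exact (Hup _ _ Ha (sf_morphism_mono _ _ _ _ g HX' Hg a b Hab)).
  - intros a b Ha Hb. apply (proj2 (proj2 Hg)). apply Hcompat; auto.
  - intros Y j Hj Fj. destruct (Hprime _ _ (proj1 Hg Y j Hj) Fj) as [z [[y [Hy ->]] Hz]].
    exists y; split; auto.
Qed.

(* St(g) = g° is continuous: the preimage of Op x' is Op (g x'). *)
Lemma St_map_continuous {X' X : Type} (le' ast' : X' -> X' -> Prop)
  (le ast : X -> X -> Prop) (g : X' -> X)
  (Hp : forall F, is_point le ast F -> is_point le' ast' (pre g F)) :
  continuous (St_opens le ast) (St_opens le' ast') (St_map Hp).
Proof. intros U' [x' ->]. exists (g x'). apply set_ext. intros F. reflexivity. Qed.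

Lemma nbhd_homeomorphism {P : Type} (O : set (set P)) :
  sober O -> forall Hn : (forall p, is_point (Fr_le O) (Fr_ast O) (nbhd O p)),
  homeomorphism O (St_opens (Fr_le O) (Fr_ast O)) (nbhd_map Hn).
Proof.
  intros [_ [Hinj Hsurj]] Hn.
  set (g := fun F : Points (Fr_le O) (Fr_ast O) =>
        proj1_sig (constructive_indefinite_description _ (Hsurj _ (proj2_sig F)))).
  assert (Hg : forall F, nbhd O (g F) = proj1_sig F).
  { intros F. unfold g. destruct (constructive_indefinite_description _ _) as [p Hp].
    exact Hp. }
  exists g. split; [|split; [|split]].
  - intros p. apply Hinj. rewrite Hg. reflexivity.
  - intros F. apply sig_eq, Hg.
  - intros U' [U ->]. replace (preimage (nbhd_map Hn) (Op (Fr_le O) (Fr_ast O) U))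
      with (proj1_sig U); [exact (proj2_sig U)|].
    apply set_ext; intros p. reflexivity.
  - intros U HU. exists (exist _ U HU). apply set_ext; intros F.
    unfold preimage, Op; simpl. rewrite <- Hg. reflexivity.
Qed.

(* For a spatial semiframe, Op is a semiframe isomorphism onto Fr(St X):
   it is surjective by construction of St, and spatiality makes it an order
   embedding that reflects overlap. *)
Lemma Op_iso {X : Type} (le ast : X -> X -> Prop) :
  semiframe le ast -> spatial le ast ->
  sf_iso le ast (Fr_le (St_opens le ast)) (Fr_ast (St_opens le ast)) (Op_map le ast).
Proof.
  intros HX [Hspatial Hoverlap].
  assert (Hembed : forall x y,
            Fr_le (St_opens le ast) (Op_map le ast x) (Op_map le ast y) -> le x y).
  { intros x y Hxy. exact (Hspatial x y Hxy). }
  set (h := fun U : OpenT (St_opens le ast) =>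
        proj1_sig (constructive_indefinite_description _ (proj2_sig U))).
  assert (Hh : forall U, Op_map le ast (h U) = U).
  { intros U. unfold h. destruct (constructive_indefinite_description _ _) as [x Hx].
    apply sig_eq; symmetry; exact Hx. }
  assert (Hh2 : forall x, h (Op_map le ast x) = x).
  { intros x. apply (sf_antisym _ _ _ HX); apply Hembed; rewrite Hh; intros F; auto. }
  exists h. split; [|split; [|split]]; auto.
  - split; [|split].
    + apply Op_map_lub.
    + intros t' t Ht' Ht. apply Fr_le_antisym.
      * apply (proj1 Ht). exact I.
      * intros F _. exact (point_top le ast _ t' (proj2_sig F) Ht').
    + intros x y [F [H1 H2]]. destruct (proj2_sig F) as [_ [_ [Hc _]]]. auto.
  - split; [|split].
    + intros Y j Hj. split.
      * intros z [U [HU ->]]. apply Hembed. rewrite !Hh. apply (proj1 Hj); auto.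
      * intros z Hz. apply Hembed. rewrite Hh. apply (proj2 Hj).
        intros U HU. rewrite <- (Hh U). apply Op_map_mono, Hz. exists U; auto.
    + intros t' t Ht' Ht.
      assert (Etop : t' = Op_map le ast t).
      { apply Fr_le_antisym.
        - apply (proj2 Ht'). intros U _. rewrite <- (Hh U).
          apply Op_map_mono, (proj1 Ht); exact I.
        - apply (proj1 Ht'). exact I. }
      rewrite Etop. apply Hh2.
    + intros x y Hxy. rewrite <- (Hh x), <- (Hh y). apply Hoverlap, Hxy.
Qed.

Theorem theorem8p18 :
  (* Fr is well defined on objects: Sober -> Spatial *)
  (forall (P : Type) (O : set (set P)),
     semitopology O -> sober O ->
     semiframe (Fr_le O) (Fr_ast O) /\ spatial (Fr_le O) (Fr_ast O)) /\
  (* Fr is well defined on morphisms: f^{-1} is a semiframe morphism *)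
  (forall (P P' : Type) (O : set (set P)) (O' : set (set P')) (f : P -> P')
     (hf : continuous O O' f),
     semitopology O -> sober O -> semitopology O' -> sober O' ->
     sf_morphism (Fr_le O') (Fr_ast O') (Fr_le O) (Fr_ast O) (Fr_map hf)) /\
  (* Fr preserves identities and (contravariantly) composition *)
  (forall (P : Type) (O : set (set P)) (hid : continuous O O (fun p : P => p)),
     forall U, Fr_map hid U = U) /\
  (forall (P P' P'' : Type) (O : set (set P)) (O' : set (set P'))
     (O'' : set (set P'')) (f : P -> P') (g : P' -> P'')
     (hf : continuous O O' f) (hg : continuous O' O'' g)
     (hgf : continuous O O'' (fun p => g (f p))),
     forall U, Fr_map hgf U = Fr_map hf (Fr_map hg U)) /\
  (* St is well defined on objects: Spatial -> Sober *)
  (forall (X : Type) (le ast : X -> X -> Prop),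
     semiframe le ast -> spatial le ast ->
     semitopology (St_opens le ast) /\ sober (St_opens le ast)) /\
  (* St is well defined on morphisms: g° maps points to points and is continuous *)
  (forall (X' X : Type) (le' ast' : X' -> X' -> Prop) (le ast : X -> X -> Prop)
     (g : X' -> X),
     semiframe le' ast' -> spatial le' ast' ->
     semiframe le ast -> spatial le ast ->
     sf_morphism le' ast' le ast g ->
     (forall F, is_point le ast F -> is_point le' ast' (pre g F)) /\
     (forall Hp : (forall F, is_point le ast F -> is_point le' ast' (pre g F)),
        continuous (St_opens le ast) (St_opens le' ast') (St_map Hp))) /\
  (* St preserves identities and (contravariantly) composition *)
  (forall (X : Type) (le ast : X -> X -> Prop)
     (Hp : forall F, is_point le ast F -> is_point le ast (pre (fun x : X => x) F)),
     forall F, St_map Hp F = F) /\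
  (forall (X'' X' X : Type) (le'' ast'' : X'' -> X'' -> Prop)
     (le' ast' : X' -> X' -> Prop) (le ast : X -> X -> Prop)
     (g : X'' -> X') (h : X' -> X)
     (Hh : forall F, is_point le ast F -> is_point le' ast' (pre h F))
     (Hg : forall F, is_point le' ast' F -> is_point le'' ast'' (pre g F))
     (Hhg : forall F, is_point le ast F -> is_point le'' ast'' (pre (fun x => h (g x)) F)),
     forall F, St_map Hhg F = St_map Hg (St_map Hh F)) /\
  (* nbhd : (P,O) -> St Fr (P,O) is an isomorphism of semitopologies ... *)
  (forall (P : Type) (O : set (set P)),
     semitopology O -> sober O ->
     forall Hn : (forall p, is_point (Fr_le O) (Fr_ast O) (nbhd O p)),
       homeomorphism O (St_opens (Fr_le O) (Fr_ast O)) (nbhd_map Hn)) /\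
  (* ... natural in (P,O): St(Fr f) o nbhd = nbhd o f *)
  (forall (P P' : Type) (O : set (set P)) (O' : set (set P')) (f : P -> P')
     (hf : continuous O O' f),
     semitopology O -> sober O -> semitopology O' -> sober O' ->
     forall (Hn : forall p, is_point (Fr_le O) (Fr_ast O) (nbhd O p))
            (Hn' : forall p, is_point (Fr_le O') (Fr_ast O') (nbhd O' p))
            (Hp : forall F, is_point (Fr_le O) (Fr_ast O) F ->
                            is_point (Fr_le O') (Fr_ast O') (pre (Fr_map hf) F)),
     forall p, St_map Hp (nbhd_map Hn p) = nbhd_map Hn' (f p)) /\
  (* Op : (X,le,ast) -> Fr St (X,le,ast) is an isomorphism of semiframes ... *)
  (forall (X : Type) (le ast : X -> X -> Prop),
     semiframe le ast -> spatial le ast ->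
     sf_iso le ast (Fr_le (St_opens le ast)) (Fr_ast (St_opens le ast)) (Op_map le ast)) /\
  (* ... natural in (X,le,ast): Fr(St g) o Op = Op o g *)
  (forall (X' X : Type) (le' ast' : X' -> X' -> Prop) (le ast : X -> X -> Prop)
     (g : X' -> X),
     semiframe le' ast' -> spatial le' ast' ->
     semiframe le ast -> spatial le ast ->
     sf_morphism le' ast' le ast g ->
     forall (Hp : forall F, is_point le ast F -> is_point le' ast' (pre g F))
            (hc : continuous (St_opens le ast) (St_opens le' ast') (St_map Hp)),
     forall x', Fr_map hc (Op_map le' ast' x') = Op_map le ast (g x')).
Proof.
  split; [intros P O HO [Hn _]; exact (conj (Fr_semiframe O HO) (Fr_spatial O Hn))|].
  split; [intros * HO _ HO' _; apply Fr_map_morphism; assumption|].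
  split; [intros; apply sig_eq; reflexivity|].
  split; [intros; apply sig_eq; reflexivity|].
  split; [intros X le ast HX _;
          exact (conj (St_semitopology le ast HX) (St_sober le ast HX))|].
  split; [intros * HX' _ HX _ Hg;
          exact (conj (pre_point le' ast' le ast g HX' HX Hg)
                      (St_map_continuous le' ast' le ast g))|].
  split; [intros; apply sig_eq; reflexivity|].
  split; [intros; apply sig_eq; reflexivity|].
  split; [intros P O _ HS; exact (nbhd_homeomorphism O HS)|].
  split; [intros; apply sig_eq; reflexivity|].
  split; [intros X le ast HX Hsp; exact (Op_iso le ast HX Hsp)|].
  intros; apply sig_eq; reflexivity.
Qed.
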